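(* Let $A \in \mathbb{R}^{M\times N}$ with $M,N$ powers of two, $K = MN$, $k=\log_2 K$, row-major entries $a_z$ ($z = iN+j$), and let $T_{h,p} = \sum_{z = pK/2^h}^{(p+1)K/2^h - 1} |a_z|^2$ ($0\le h\le k$, $0\le p<2^h$) be its segment tree of squared norms. Suppose a Bucket Brigade QRAM stores $K$ memory cells $\{\ket{L_z}\}_{z=0}^{K-1}$ of $1+2t$ qubits each, with $\ket{L_0} = \ket{\mathrm{s}(a_0)}\ket{T_{0,0}}^t\ket{b}^t$ ($b$ an arbitrary $t$-bit string) and $\ket{L_z} = \ket{\mathrm{s}(a_z)}\ket{T_{l(z),2d(z)}}^t\ket{T_{l(z),2d(z)+1}}^t$ for $1\le z\le K-1$, where $l(z) = \lfloor\log_2 z\rfloor + 1$, $d(z) = z - 2^{\lfloor \log_2 z\rfloor}$, $\mathrm{s}(a_z) = 0$ if $a_z\ge 0$ and $1$ if $a_z<0$, and values are $t$-bit fixed-point basis encodings. The BBQRAM retrieval is $\ket{z}^k\ket{0}^{1+2t} \mapsto \ket{z}^k\ket{L_z}^{1+2t}$ for $0 \le z < K$ (extended linearly to superpositions, and allowing only designated sub-registers of the cell to be copied into the working register). Then this memory layout enables the following retrievals, for arbitrary nonzero coefficients $\alpha_z \in \mathbb{C}$: (1) ($h=0$) $\ket{0}^k\ket{0}^1\ket{0}^t\ket{0}^t \mapsto \ket{0}^k\ket{0}^1\ket{T_{0,0}}^t\ket{0}^t$; (2) for every $1 \le h \le k$: $\sum_{z=2^{h-1}}^{2^h-1}\alpha_z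 \ket{z}^k \ket{0}^1\ket{0}^{2t} \mapsto \sum_{z=2^{h-1}}^{2^h-1} \alpha_z\ket{z}^k\ket{0}^1\ket{T_{l(z),2d(z)}}^t\ket{T_{l(z),2d(z)+1}}^t$, where $\ket{z}^k$ for $z<2^h$ is $\ket{0}^{k-h}\ket{z}^h$; these are exactly the sibling pairs at height $h$ of $T$; (3) $\sum_{z=0}^{K-1}\alpha_z\ket{z}^k\ket{0}^1\ket{0}^t\ket{0}^t \mapsto \sum_{z=0}^{K-1}\alpha_z \ket{z}^k\ket{\mathrm{s}(a_z)}^1\ket{0}^t\ket{0}^t$.
   Context: $\ket{\psi}^s$ denotes an $s$-qubit register; $\ket{z}^k$ is the $k$-bit binary (basis) encoding of the integer $z$ with most significant qubit leftmost. The Bucket Brigade QRAM is a binary tree of routing switches whose leaves are memory cells storing classical bit strings in the computational basis, queried coherently by an address register. *)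

From HB Require Import structures.
From mathcomp Require Import all_boot all_order all_algebra.
From mathcomp Require Import complex.
Set Implicit Arguments. Unset Strict Implicit. Unset Printing Implicit Defensive.
Import Order.TTheory GRing.Theory Num.Theory.
Local Open Scope ring_scope.

(* Reals: an arbitrary real closed field R (e.g. the reals);
   amplitudes: its complexification R[i]. *)

Lemma pow2_gt0 (n : nat) : (0 < 2 ^ n)%N.
Proof. by rewrite expn_gt0. Qed.

(* |z>^n : the basis index z (taken mod 2^n) of an n-qubit register;
   the integer z is identified with its n-bit binary encoding (MSB leftmost),
   so for z < 2^h <= 2^n this is |0>^{n-h}|z>^h. *)
Definition toI (n z : nat) : 'I_(2 ^ n) := Ordinal (ltn_pmod z (pow2_gt0 n)).

Definition zeroI (n : nat) : 'I_(2 ^ n) := toI n 0.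

Definition entry (R : rcfType) (m n : nat) (A : 'M[R]_(2 ^ m, 2 ^ n)) (z : nat) : R :=
  A (toI m (z %/ 2 ^ n)) (toI n (z %% 2 ^ n)).

Definition segT (R : rcfType) (m n : nat) (A : 'M[R]_(2 ^ m, 2 ^ n)) (h p : nat) : R :=
  let K := (2 ^ (m + n))%N in
  \sum_(p * (K %/ 2 ^ h) <= z < p.+1 * (K %/ 2 ^ h)) `|entry A z| ^+ 2.

Definition lvl (z : nat) : nat := (trunc_log 2 z).+1.
Definition dz (z : nat) : nat := (z - 2 ^ trunc_log 2 z)%N.

Definition sgnbit (R : rcfType) (x : R) : bool := x < 0.

Notation cell t := (bool * 'I_(2 ^ t) * 'I_(2 ^ t))%type.

(* The memory layout L_z.  enc is the t-bit fixed-point basis encoding of values,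
   b an arbitrary t-bit string. *)
Definition layout (R : rcfType) (m n t : nat) (A : 'M[R]_(2 ^ m, 2 ^ n))
    (enc : R -> 'I_(2 ^ t)) (b : 'I_(2 ^ t)) (z : nat) : cell t :=
  if z == 0%N then (sgnbit (entry A 0), enc (segT A 0 0), b)
  else (sgnbit (entry A z), enc (segT A (lvl z) (dz z).*2),
        enc (segT A (lvl z) (dz z).*2.+1)).

Notation basis k t := ('I_(2 ^ k) * cell t)%type.

Notation state C k t := {ffun basis k t -> C}.

Definition ket (C : nzRingType) (k t : nat) (z : 'I_(2 ^ k)) (c : cell t) : state C k t :=
  [ffun x => if x == (z, c) then 1 else 0].

(* Selecting which designated sub-registers of the cell are copied. *)
Definition mask (t : nat) (sel : bool * bool * bool) (c : cell t) : cell t :=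
  let: (s1, s2, s3) := sel in
  let: (x, u, v) := c in
  (s1 && x, if s2 then u else zeroI t, if s3 then v else zeroI t).

(* BBQRAM retrieval |z>^k|0>^{1+2t} |-> |z>^k|L_z> (restricted to the selected
   sub-registers), extended linearly to (superpositions of) states whose data
   register is |0>^{1+2t}; L is the cell contents, indexed by z < 2^k. *)
Definition bbqram (C : nzRingType) (k t : nat) (L : nat -> cell t)
    (sel : bool * bool * bool) (psi : state C k t) : state C k t :=
  [ffun x => \sum_(z : 'I_(2 ^ k)) psi (z, (false, zeroI t, zeroI t)) * ket C z (mask sel (L z)) x].

Definition superpos (C : nzRingType) (k t : nat) (lo hi : nat) (alpha : nat -> C)
    (c : nat -> cell t) : state C k t :=
  [ffun x => \sum_(lo <= z < hi) alpha z * ket C (toI k z) (c z) x].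

(* Each retrieval is a single BBQRAM query with a suitable selection of
   sub-registers: the first value of L_0 is T_{0,0}; the sign bit of every
   L_z is s(a_z); and for 2^(h-1) <= z < 2^h we have l(z) = h and
   d(z) = z - 2^(h-1), so the addresses of height h list the sibling pairs
   (T_{h,2p}, T_{h,2p+1}), 0 <= p < 2^(h-1), each exactly once.  Since the
   query is linear and diagonal in the address register, on a superposition
   of addresses it acts cell by cell. *)

From Pilot Require Import Defs.
From HB Require Import structures.
From mathcomp Require Import all_boot all_order all_algebra.
From mathcomp Require Import complex.
Import Order.TTheory GRing.Theory Num.Theory.
Local Open Scope ring_scope.

Lemma zeroI_val (n : nat) : zeroI n = 0%N :> nat.
Proof. exact: mod0n. Qed.

Section BBQRAMQuery.

Variables (C : nzRingType) (k t : nat) (L : nat -> cell t) (sel : bool * bool * bool).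

Let zc : cell t := (false, zeroI t, zeroI t).

Lemma bbqram_ket (z : 'I_(2 ^ k)) :
  bbqram L sel (ket C z zc) = ket C z (Defs.mask sel (L z)).
Proof.
apply/ffunP => x; rewrite [LHS]ffunE (bigD1 z) //= big1 ?addr0.
  by rewrite ffunE eqxx mul1r.
by move=> j neq_jz; rewrite ffunE xpair_eqE (negbTE neq_jz) mul0r.
Qed.

Lemma bbqram_superpos (lo hi : nat) (alpha : nat -> C) (c : nat -> cell t) :
  (hi <= 2 ^ k)%N -> (forall z, (lo <= z < hi)%N -> Defs.mask sel (L z) = c z) ->
  bbqram L sel (superpos k lo hi alpha (fun _ => zc)) = superpos k lo hi alpha c.
Proof.
move=> hi_le maskL; apply/ffunP => x; rewrite !ffunE.
under eq_bigr => z _ do rewrite ffunE big_distrl /=.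
rewrite exchange_big /=; apply: eq_big_nat => z /andP[lo_z z_hi].
have z_lt : (z < 2 ^ k)%N by apply: leq_trans z_hi hi_le.
rewrite (bigD1 (toI k z)) //= big1 ?addr0.
  by rewrite ffunE eqxx mulr1 modn_small ?maskL ?lo_z.
by move=> j neq_jz; rewrite ffunE xpair_eqE (negbTE neq_jz) mulr0 mul0r.
Qed.

End BBQRAMQuery.

Lemma lvl_dyadic (h z : nat) : (2 ^ h <= z < 2 ^ h.+1)%N -> lvl z = h.+1.
Proof. by move=> z_in; rewrite /lvl (trunc_log_eq _ z_in). Qed.

Lemma dz_dyadic (h z : nat) : (2 ^ h <= z < 2 ^ h.+1)%N -> dz z = (z - 2 ^ h)%N.
Proof. by move=> z_in; rewrite /dz (trunc_log_eq _ z_in). Qed.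

Lemma map_dz_dyadic (h : nat) :
  [seq dz z | z <- iota (2 ^ h) (2 ^ h)] = iota 0 (2 ^ h).
Proof.
have -> : iota (2 ^ h) (2 ^ h) = map (addn (2 ^ h)) (iota 0 (2 ^ h)) :> seq nat.
  by rewrite -iotaDl addn0.
rewrite -map_comp -[RHS]map_id.
apply/eq_in_map => p; rewrite mem_iota add0n => p_lt /=.
rewrite (@dz_dyadic h) ?addKn // leq_addr /= expnS mul2n -addnn ltn_add2l.
exact: p_lt.
Qed.

Lemma layout_neq0 (R : rcfType) (m n t : nat) (A : 'M[R]_(2 ^ m, 2 ^ n))
    (enc : R -> 'I_(2 ^ t)) (b : 'I_(2 ^ t)) (z : nat) : z != 0%N ->
  layout A enc b z = (sgnbit (entry A z), enc (segT A (lvl z) (dz z).*2),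
                      enc (segT A (lvl z) (dz z).*2.+1)).
Proof. by rewrite /layout => /negbTE ->. Qed.

Lemma mask_sign_layout (R : rcfType) (m n t : nat) (A : 'M[R]_(2 ^ m, 2 ^ n))
    (enc : R -> 'I_(2 ^ t)) (b : 'I_(2 ^ t)) (z : nat) :
  Defs.mask (true, false, false) (layout A enc b z)
  = (sgnbit (entry A z), zeroI t, zeroI t).
Proof. by rewrite /layout; case: ifP => [/eqP ->|]. Qed.

Theorem corollary4p2 (R : rcfType) (m n t : nat) (A : 'M[R]_(2 ^ m, 2 ^ n))
    (enc : R -> 'I_(2 ^ t)) (b : 'I_(2 ^ t)) :
  let k := (m + n)%N in
  let K := (2 ^ k)%N in
  let L := layout A enc b in
  let zc : cell t := (false, zeroI t, zeroI t) in
  (* (1) h = 0 *)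
  (exists sel, bbqram L sel (ket R[i] (zeroI k) zc)
               = ket R[i] (zeroI k) (false, enc (segT A 0 0), zeroI t))
  /\
  (* (2) every height 1 <= h <= k: sibling pairs at height h *)
  (forall h : nat, (1 <= h <= k)%N ->
     (exists sel, forall alpha : nat -> R[i],
        (forall z, (2 ^ h.-1 <= z < 2 ^ h)%N -> alpha z != 0) ->
        bbqram L sel (superpos k (2 ^ h.-1) (2 ^ h) alpha (fun _ => zc))
        = superpos k (2 ^ h.-1) (2 ^ h) alpha
            (fun z => (false, enc (segT A (lvl z) (dz z).*2),
                              enc (segT A (lvl z) (dz z).*2.+1))))
     /\ (forall z, (2 ^ h.-1 <= z < 2 ^ h)%N -> lvl z = h)
     /\ [seq dz z | z <- iota (2 ^ h.-1) (2 ^ h.-1)] = iota 0 (2 ^ h.-1))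
  /\
  (* (3) sign bits *)
  (exists sel, forall alpha : nat -> R[i],
     (forall z, (z < K)%N -> alpha z != 0) ->
     bbqram L sel (superpos k 0 K alpha (fun _ => zc))
     = superpos k 0 K alpha (fun z => (sgnbit (entry A z), zeroI t, zeroI t))).
Proof.
move=> k K L zc; split; [|split].
- exists (false, true, false).
  by rewrite bbqram_ket /L /layout zeroI_val.
- case=> // h /andP[_ h_le]; split; [|split] => /=.
  + exists (false, true, true) => alpha _.
    apply: bbqram_superpos => [|z /andP[z_ge _]]; first by rewrite leq_pexp2l.
    by rewrite /L layout_neq0 // -lt0n (leq_trans _ z_ge) ?expn_gt0.
  + exact: lvl_dyadic.
  + exact: map_dz_dyadic.
- exists (true, false, false) => alpha _.
  by apply: bbqram_superpos => // z _; apply: mask_sign_layout.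
Qed.
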